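(* Let $\mathcal G$ encode a fine mixed subdivision of $n\Delta^{d-1}$ with $n\ge2$, and let $t$ be a lattice point of $(n-2)\Delta^{d-1}$. Then for every $\bar j\in[\bar d]$, the augmented degree of $\bar j$ in the tree-linkage covector $\tilde{\mathbb G}(t)$ equals $t_{\bar j}+2$; i.e. the augmented degree vector equals $t+2\cdot\mathbf 1$.
   Context: Fix positive integers $n,d$; $K_{n,d}$ is the complete bipartite graph with left vertices $[n]$ and right vertices $[\bar d]=\{\bar1,\dots,\bar d\}$; graphs are identified with edge sets; $RD$ denotes the vector of right-vertex degrees, $\mathbf 1$ the all-ones vector in $\mathbb Z^{[\bar d]}$, $e_{\bar j}$ a unit vector; lattice points of $k\Delta^{d-1}$ are vectors in $\mathbb Z_{\ge0}^{[\bar d]}$ with sum $k$. Two acyclic subgraphs are compatible if whenever both contain a perfect matching between the same $I\subseteq[n]$, $\bar J\subseteq[\bar d]$, these matchings coincide. A collection $\mathcal G$ of subgraphs of $K_{n,d}$ encodes a fine mixed subdivision of $n\Delta^{d-1}$ if: every $G\in\mathcal G$ is a spanning tree of $K_{n,d}$; (tree linkage) for each $G\in\mathcal G$ and each edge $e\in G$ not incident to a leaf, there are $G'\in\mathcal G$, $G'\neq G$, and $e'\in G'$ with $G\setminus e=G'\setminus e'$; (compatibility) any two trees of $\mathcal G$ are compatible. It is known that then for each lattice point $u$ of $(n-1)\Delta^{d-1}$ there is exactly one tree $\mathbb T(u)\in\mathcal G$ with $RD(\mathbb T(u))=u+\mathbf 1$, and these are all the trees of $\mathcal G$. For a lattice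 point $t$ of $(n-2)\Delta^{d-1}$, the tree-linkage graph $\mathbb G(t)$ is the graph on vertex set $[\bar d]$ in which $\bar j\neq\bar j'$ are adjacent iff $\mathbb T(t+e_{\bar j})\setminus\mathbb T(t+e_{\bar j'})=\{(i,\bar j)\}$ and $\mathbb T(t+e_{\bar j'})\setminus\mathbb T(t+e_{\bar j})=\{(i',\bar j')\}$ for some $i,i'\in[n]$ (with near labels $i$ at $\bar j$ and $i'$ at $\bar j'$). Let $T_t=\bigcap_{\bar j\in[\bar d]}\mathbb T(t+e_{\bar j})$. The tree-linkage covector $\tilde{\mathbb G}(t)$ is $\mathbb G(t)$ with each vertex $\bar j$ additionally labeled by all $i\in[n]$ with $(i,\bar j)\in T_t$. The augmented degree of $\bar j$ is its degree in $\mathbb G(t)$ plus the number of vertex labels at $\bar j$, i.e. $\deg_{\mathbb G(t)}(\bar j)+\#\{i:(i,\bar j)\in T_t\}$. *)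

From mathcomp Require Import all_boot.
Set Implicit Arguments. Unset Strict Implicit. Unset Printing Implicit Defensive.

Section KGraph.
Variables n d : nat.

(* Edges of K_{n,d}: pairs (i, jbar) with i in [n] (as 'I_n) and jbar in [dbar] (as 'I_d). *)
Definition edge := ('I_n * 'I_d)%type.
Definition vert := ('I_n + 'I_d)%type.

Definition adj (G : {set edge}) : rel vert :=
  fun u v => match u, v with
             | inl i, inr j => (i, j) \in G
             | inr j, inl i => (i, j) \in G
             | _, _ => false
             end.

Definition connectedG (G : {set edge}) : Prop :=
  forall u v : vert, connect (adj G) u v.

(* acyclic: no edge lies on a cycle, i.e. removing any edge disconnects its endpoints *)
Definition acyclic (G : {set edge}) : Prop :=
  forall e, e \in G -> ~~ connect (adj (G :\ e)) (inl e.1) (inr e.2).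

Definition spanning_tree (G : {set edge}) : Prop := connectedG G /\ acyclic G.

Definition degG (G : {set edge}) (v : vert) : nat := #|[set w | adj G v w]|.

Definition incident_to_leaf (G : {set edge}) (e : edge) : bool :=
  (degG G (inl e.1) == 1) || (degG G (inr e.2) == 1).

Definition perfect_matching (M : {set edge}) (I : {set 'I_n}) (J : {set 'I_d}) : bool :=
  [&& [forall e in M, (e.1 \in I) && (e.2 \in J)],
      [forall i in I, #|[set e in M | e.1 == i]| == 1] &
      [forall j in J, #|[set e in M | e.2 == j]| == 1]].

Definition compatible (G1 G2 : {set edge}) : Prop :=
  forall (I : {set 'I_n}) (J : {set 'I_d}) (M1 M2 : {set edge}),
    M1 \subset G1 -> M2 \subset G2 ->
    perfect_matching M1 I J -> perfect_matching M2 I J -> M1 = M2.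

Definition encodes_fms (GG : {set {set edge}}) : Prop :=
  [/\ (forall G, G \in GG -> spanning_tree G),
      (forall G e, G \in GG -> e \in G -> ~~ incident_to_leaf G e ->
         exists G', exists e', [/\ G' \in GG, G' != G, e' \in G' & G :\ e = G' :\ e'])
    & (forall G1 G2, G1 \in GG -> G2 \in GG -> compatible G1 G2)].

Definition RD (G : {set edge}) (j : 'I_d) : nat := #|[set i : 'I_n | (i, j) \in G]|.

(* Tree-linkage graph G(t), given the trees T j = TT(t + e_j) *)
Definition linked (T : 'I_d -> {set edge}) (j j' : 'I_d) : bool :=
  [&& j != j',
      [exists i : 'I_n, T j :\: T j' == [set (i, j)]] &
      [exists i' : 'I_n, T j' :\: T j == [set (i', j')]]].

Definition Tt (T : 'I_d -> {set edge}) : {set edge} := \bigcap_(j : 'I_d) T j.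

Definition augmented_degree (T : 'I_d -> {set edge}) (j : 'I_d) : nat :=
  #|[set j' | linked T j j']| + #|[set i : 'I_n | (i, j) \in Tt T]|.

End KGraph.

(* Fix j and let N be the set of left neighbours of j in T(t+e_j), so |N| = t_j + 2.
   The labels at j form a subset of N, and a neighbour k of j in the tree-linkage
   graph carries the near label i such that (i,j) is the edge T(t+e_j) loses towards
   T(t+e_k).  The near label map is a bijection from the neighbours of j onto the
   unlabelled elements of N, which gives the augmented degree |N|.

   Everything rests on one consequence of compatibility: for compatible trees T, T',
   the directed graph with arcs from left to right along T and from right to left
   along T' has no directed cycle of length > 2, since such a cycle would carry two
   distinct perfect matchings on the same vertex sets, one in T and one in T'.
   Inspecting a sink component of that graph shows that a tree is determined, among
   trees compatible with it, by a right degree vector dominating its own, and that an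
   edge (i,j) at a leaf i of T lies in every compatible connected T' whose right
   degrees dominate those of T up to one at j.  With tree linkage this gives
   surjectivity; injectivity compares two exchanges of the same edge. *)

From mathcomp Require Import all_boot zify.
Set Implicit Arguments. Unset Strict Implicit. Unset Printing Implicit Defensive.

Lemma connect_forward_closed (T : finType) (e : rel T) (X : {set T}) x y :
  (forall u w, u \in X -> e u w -> w \in X) -> x \in X -> connect e x y -> y \in X.
Proof.
move=> clX Xx /connectP[p + ->].
by elim: p x Xx => //= z p IHp x Xx /andP[/(clX _ _ Xx) Xz]; apply: IHp.
Qed.

(* Take v with a smallest reachable set. *)
Lemma exists_sink (T : finType) (e : rel T) (x0 : T) :
  exists v, forall w, connect e v w -> connect e w v.
Proof.
have [v _ minv] := arg_minnP (fun v => #|[set w | connect e v w]|) (isT : xpredT x0).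
exists v => w vw.
have sub_wv : [set u | connect e w u] \subset [set u | connect e v u].
  by apply/subsetP => u; rewrite !inE; apply: connect_trans.
have /eqP/setP/(_ v) : [set u | connect e w u] == [set u | connect e v u].
  by rewrite eqEcard sub_wv minv.
by rewrite !inE connect0.
Qed.

Lemma next_next_neq (T : eqType) (c : seq T) z :
  uniq c -> 2 < size c -> z \in c -> next c (next c z) != z.
Proof.
move=> Uc Sc zc; case: (rot_to zc) => i s' def_c.
rewrite -!(next_rot i Uc) def_c.
have Ur : uniq (z :: s') by rewrite -def_c rot_uniq.
have Sr : 2 < size (z :: s') by rewrite -def_c size_rot.
case: s' Ur Sr {def_c} => [|a [|b r]] //= Ur _.
move: Ur; rewrite !inE !negb_or => /and4P[/and3P[za zb _] /andP[ab _] _ _].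
by rewrite eqxx (eq_sym a z) (negbTE za) eqxx eq_sym.
Qed.

Lemma setD_set1_swap (T : finType) (A B : {set T}) a b :
  A :\: B = [set a] -> B :\: A = [set b] -> B = b |: (A :\ a) /\ b \notin A.
Proof.
move=> /setP AB /setP BA; have : b \in B :\: A by rewrite BA set11.
rewrite inE => /andP[bA _].
split=> //; apply/setP => e; move: (AB e) (BA e); rewrite !inE.
by move: (e == a) (e == b) (e \in A) (e \in B) => [] [] [] [] /=.
Qed.

Lemma swap_setD_set1 (T : finType) (A : {set T}) a b : a \in A -> b \notin A ->
  A :\: (b |: (A :\ a)) = [set a] /\ (b |: (A :\ a)) :\: A = [set b].
Proof.
move=> aA bA; split; apply/setP => e; rewrite !inE.
  case: (e =P a) => [->|_] /=; last by case: (e \in A); rewrite ?orbT ?andbF.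
  by rewrite aA orbF andbT; apply: contraNneq bA => <-.
by case: (e =P b) => [->|_]; rewrite ?bA //; case: (e \in A); rewrite ?andbF.
Qed.

Section Bipartite.
Variables n d : nat.
Local Notation E := (edge n d).
Local Notation V := (vert n d).
Implicit Types (G F : {set E}) (u w : V).

Lemma adj_sym G : symmetric (adj G).
Proof. by case=> [x|y] [x'|y']. Qed.

Lemma adj_setU1 G e u w : adj (e |: G) u w = adj [set e] u w || adj G u w.
Proof. by case: u => [x|y]; case: w => [x'|y'] //=; rewrite !inE. Qed.

Lemma adj_setD1 G e u w : adj (G :\ e) u w = ~~ adj [set e] u w && adj G u w.
Proof. by case: u => [x|y]; case: w => [x'|y'] //=; rewrite !inE. Qed.

Lemma adj_set1 e u w : adj [set e] u w -> w = inl e.1 \/ w = inr e.2.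
Proof.
by case: e => x0 y0; case: u => [x|y]; case: w => [x'|y'] //=;
   rewrite inE => /eqP[<- <-]; auto.
Qed.

Lemma degG_inr G y : degG G (inr y) = RD G y.
Proof.
rewrite /degG /RD -(card_imset _ (@inl_inj 'I_n 'I_d)); apply: eq_card => -[x|y'].
  by rewrite !inE /= (mem_imset _ _ (@inl_inj 'I_n 'I_d)) inE.
by rewrite !inE /=; apply/esym/imsetP => -[].
Qed.

Lemma degG_inl_leaf G i j y : degG G (inl i) = 1 -> (i, j) \in G -> (i, y) \in G -> y = j.
Proof.
move=> /eqP/cards1P[w0 nbrs] ij iy.
have : inr j \in [set w | adj G (inl i) w] by rewrite inE.
have : inr y \in [set w | adj G (inl i) w] by rewrite inE.
by rewrite nbrs !inE => /eqP<- /eqP[].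
Qed.

Lemma RD_setU1 G e y : RD (e |: G) y <= RD G y + (e.2 == y).
Proof.
rewrite /RD; have -> : [set x | (x, y) \in e |: G] =
    [set x | (x, y) \in G] :|: [set x | (x == e.1) && (e.2 == y)].
  by case: e => x0 y0; apply/setP => x; rewrite !inE xpair_eqE [y == y0]eq_sym orbC.
apply: leq_trans (leq_card_setU _ _) _; rewrite leq_add2l.
case: (e.2 == y); last by rewrite (eq_card0 (fun x => _)) // => x; rewrite inE andbF.
apply: (@leq_trans #|[set e.1]|); last by rewrite cards1.
by apply: subset_leq_card; apply/subsetP => x; rewrite !inE andbT.
Qed.

Lemma RD_setD1 G e y : e \in G -> RD (G :\ e) y + (e.2 == y) = RD G y.
Proof.
case: e => x0 y0 e_in; rewrite /RD /=; case: (y0 =P y) => [<-|ny].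
  have -> : [set x | (x, y0) \in G :\ (x0, y0)] = [set x | (x, y0) \in G] :\ x0.
    by apply/setP => x; rewrite !inE xpair_eqE eqxx andbT.
  by rewrite [in RHS](cardsD1 x0) inE e_in addnC.
rewrite addn0; apply: eq_card => x; rewrite !inE xpair_eqE.
by case: (y =P y0) => [yy0|]; rewrite ?andbF //; case: ny.
Qed.

Lemma connectedG_closed G (X : {set V}) u : connectedG G -> u \in X ->
  (forall u w, u \in X -> adj G u w -> w \in X) -> forall w, w \in X.
Proof. by move=> connG uX clX w; apply: connect_forward_closed clX uX (connG u w). Qed.

Lemma connect_setD1 G e : connectedG G -> forall w,
  connect (adj (G :\ e)) (inl e.1) w || connect (adj (G :\ e)) (inr e.2) w.
Proof.
move=> connG w.
pose X := [set w | connect (adj (G :\ e)) (inl e.1) w ||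
                   connect (adj (G :\ e)) (inr e.2) w].
suff: w \in X by rewrite inE.
apply: (connectedG_closed (u := inl e.1) connG) => [|u w']; first by rewrite inE connect0.
rewrite !inE => cu uw; case eAuw: (adj [set e] u w').
  by case: (adj_set1 eAuw) => ->; rewrite connect0 ?orbT.
have /connect1 uw' : adj (G :\ e) u w' by rewrite adj_setD1 eAuw uw.
by case/orP: cu => cu; rewrite (connect_trans cu uw') ?orbT.
Qed.

Lemma connect_setU1 F e u : connectedG (e |: F) ->
  connect (adj F) u (inl e.1) -> connect (adj F) u (inr e.2) ->
  forall w, connect (adj F) u w.
Proof.
move=> connG ue1 ue2 w.
suff: w \in [set w | connect (adj F) u w] by rewrite inE.
apply: (connectedG_closed (u := u) connG) => [|u' w']; first by rewrite inE connect0.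
rewrite !inE adj_setU1 => uu' /orP[/adj_set1[]->|] //.
by move=> /connect1; apply: connect_trans.
Qed.

Implicit Type c : seq V.

Definition alt (T T' : {set E}) : rel V := fun u w =>
  match u, w with
  | inl x, inr y => (x, y) \in T
  | inr y, inl x => (x, y) \in T'
  | _, _ => false
  end.

Lemma alt_irr (T T' : {set E}) u : alt T T' u u = false.
Proof. by case: u. Qed.

Definition crossing : rel V := fun u w =>
  match u, w with inl _, inr _ | inr _, inl _ => true | _, _ => false end.

Definition next_matching c : {set E} := [set e | next c (inl e.1) == inr e.2].

Lemma next_matching_mem c x y : (x, y) \in next_matching c -> inl x \in c.
Proof. by rewrite inE /=; apply: contraTT => /negbTE xc; rewrite next_nth xc. Qed.

Lemma next_matching_perfect c : uniq c -> cycle crossing c ->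
  perfect_matching (next_matching c) [set x | inl x \in c] [set y | inr y \in c].
Proof.
move=> Uc cyc; apply/and3P; split.
- apply/forall_inP => -[x y] /[dup] /next_matching_mem xc.
  by rewrite !inE /= xc => /eqP<-; rewrite mem_next.
- apply/forall_inP => x; rewrite inE => xc.
  have := next_cycle cyc xc; case nx: (next c (inl x)) => [//|y] _.
  apply/cards1P; exists (x, y); apply/setP => -[x' y']; rewrite !inE /= xpair_eqE.
  case: (x' =P x) => [->|_]; last by rewrite andbF.
  by rewrite nx andbT (inj_eq (@inr_inj _ _)) eq_sym.
- apply/forall_inP => y; rewrite inE => yc.
  have := prev_cycle cyc yc; case px: (prev c (inr y)) => [x|//] _.
  have nx : next c (inl x) = inr y by rewrite -px next_prev.
  apply/cards1P; exists (x, y); apply/setP => -[x' y']; rewrite !inE /= xpair_eqE.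
  case: (y' =P y) => [->|_]; last by rewrite !andbF.
  by rewrite -nx (inj_eq (can_inj (prev_next Uc))) (inj_eq (@inl_inj _ _)) !andbT.
Qed.

(* The successor map of the cycle on its left vertices is a perfect matching inside T,
   and on the reversed cycle one inside T'; compatibility makes them equal, so the
   cycle turns back after two steps. *)
Lemma compatible_alt_cycle (T T' : {set E}) c :
  compatible T T' -> uniq c -> cycle (alt T T') c -> size c <= 2.
Proof.
move=> cTT' Uc cyc; rewrite leqNgt; apply/negP => Sc.
have cross_c : cycle crossing c by apply: sub_cycle cyc => -[x|y] [x'|y'].
have cross_rc : cycle crossing (rev c).
  by rewrite rev_cycle; apply: sub_cycle cross_c => -[x|y] [x'|y'].
have sub_T : next_matching c \subset T.
  apply/subsetP => -[x y] /[dup] /next_matching_mem xc; rewrite inE /= => /eqP nx.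
  by have := next_cycle cyc xc; rewrite nx.
have sub_T' : next_matching (rev c) \subset T'.
  apply/subsetP => -[x y] /[dup] /next_matching_mem; rewrite mem_rev => xc.
  rewrite inE /= next_rev // => /eqP px.
  by have := prev_cycle cyc xc; rewrite px.
have Urc : uniq (rev c) by rewrite rev_uniq.
have pm_rc := next_matching_perfect Urc cross_rc.
have pm_c := next_matching_perfect Uc cross_c.
have [sides_l sides_r] : [set x | inl x \in rev c] = [set x | inl x \in c] /\
                         [set y | inr y \in rev c] = [set y | inr y \in c].
  by split; apply/setP => z; rewrite !inE mem_rev.
rewrite sides_l sides_r in pm_rc.
have eqM := cTT' _ _ _ _ sub_T sub_T' pm_c pm_rc.
have [x xc] : exists x, inl x \in c.
  have /hasP[w wc _] : has predT c by rewrite has_predT; apply: leq_trans Sc.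
  case: w wc => [x|y] wc; first by exists x.
  have := next_cycle cyc wc; rewrite -(mem_next c) in wc.
  by case: (next c (inr y)) wc => [x|//] xc _; exists x.
have := next_cycle cyc xc; case nx: (next c (inl x)) => [//|y] _.
have : (x, y) \in next_matching (rev c) by rewrite -eqM inE /= nx.
rewrite inE /= next_rev // -nx => /eqP px.
by have := next_next_neq Uc Sc xc; rewrite -px (next_prev Uc) eqxx.
Qed.

Lemma compatible_alt_back (T T' : {set E}) u w : compatible T T' ->
  alt T T' u w -> connect (alt T T') w u -> alt T T' w u.
Proof.
move=> cTT' uw /connectP[p w_p def_u]; move: uw; rewrite {u}def_u.
case: (shortenP w_p) => p' p'_path Up' _ uw.
have cyc : cycle (alt T T') (w :: p') by rewrite /cycle rcons_path p'_path.
have := compatible_alt_cycle cTT' Up' cyc.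
case: p' {Up' cyc} p'_path uw => [|v [|//]] /=; first by rewrite alt_irr.
by rewrite andbT.
Qed.

Lemma connect_adj_alt (F T T' : {set E}) : F \subset T -> F \subset T' ->
  forall u w, connect (adj F) u w -> connect (alt T T') u w.
Proof.
move=> FT FT'; apply: connect_sub => -[x|y] [x'|y'] //= e_in; apply: connect1.
  exact: (subsetP FT).
exact: (subsetP FT').
Qed.

Section Sink.
Variables (T T' : {set E}) (v : V).
Hypothesis cTT' : compatible T T'.
Hypothesis sink_v : forall w, connect (alt T T') v w -> connect (alt T T') w v.

Lemma sink_alt_back u w : connect (alt T T') v u -> alt T T' u w -> alt T T' w u.
Proof.
move=> vu uw; have wv := sink_v (connect_trans vu (connect1 uw)).
exact: compatible_alt_back cTT' uw (connect_trans wv vu).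
Qed.

Lemma sink_RD y : connect (alt T T') v (inr y) ->
  RD T y = RD T' y + #|[set x | (x, y) \in T :\: T']|.
Proof.
move=> vy; have sub : [set x | (x, y) \in T'] \subset [set x | (x, y) \in T].
  by apply/subsetP => x; rewrite !inE => xy; apply: (sink_alt_back (w := inl x) vy).
rewrite /RD -(cardsID [set x | (x, y) \in T'] [set x | (x, y) \in T]) (setIidPr sub).
by congr (_ + _); apply: eq_card => x; rewrite !inE andbC.
Qed.

End Sink.

Lemma compatible_RD_le_eq (T T' : {set E}) : connectedG T -> compatible T T' ->
  (forall y, RD T y <= RD T' y) -> T = T'.
Proof.
move=> connT cTT' leRD; apply/setP => -[x y].
have [v sink_v] := exists_sink (alt T T') (inl x).
have vX w : connect (alt T T') v w.
  suff: w \in [set w | connect (alt T T') v w] by rewrite inE.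
  apply: (connectedG_closed (u := v) connT) => [|u w']; first by rewrite inE connect0.
  rewrite !inE => vu; case: u vu => [x'|y'] vu; case: w' => [x''|y''] //= e_in.
    by apply: connect_trans vu (connect1 _).
  suff e_in' : (x'', y') \in T' by apply: connect_trans vu (connect1 _).
  apply: contraTT (leRD y') => /negbTE notT'.
  rewrite -ltnNge (sink_RD cTT' sink_v vu) -{1}[RD T' y']addn0 ltn_add2l.
  by apply/card_gt0P; exists x''; rewrite !inE e_in notT'.
apply/idP/idP => e_in.
  exact: (@sink_alt_back T T' v cTT' sink_v (inl x) (inr y) (vX _) e_in).
exact: (@sink_alt_back T T' v cTT' sink_v (inr y) (inl x) (vX _) e_in).
Qed.

(* The sink component X is closed under T-adjacency except along j -> i; it cannot
   contain i, yet it contains every other vertex and hence a T'-neighbour of i. *)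
Lemma compatible_leaf_edge (T T' : {set E}) i j :
  connectedG T -> connectedG T' -> compatible T T' ->
  (i, j) \in T -> (forall y, (i, y) \in T -> y = j) ->
  (forall y, y != j -> RD T y <= RD T' y) -> RD T j <= (RD T' j).+1 ->
  (i, j) \in T'.
Proof.
move=> connT connT' cTT' ijT leaf leRD leRDj; apply/idPn => ijT'.
have [v sink_v] := exists_sink (alt T T') (inl i).
pose X := [set w | connect (alt T T') v w].
have altX u w : u \in X -> alt T T' u w -> w \in X.
  by rewrite !inE => vu /connect1; apply: connect_trans.
have missing x y : inr y \in X -> (x, y) \in T -> (x, y) \notin T' -> x = i /\ y = j.
  rewrite inE => vy xyT xyT'.
  have S_x : x \in [set x | (x, y) \in T :\: T'] by rewrite !inE xyT xyT'.
  have := sink_RD cTT' sink_v vy; case: (y =P j) => [eyj|/eqP nyj] RDy.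
    subst y; have S_i : i \in [set x | (x, j) \in T :\: T'] by rewrite !inE ijT ijT'.
    have : #|[set x | (x, j) \in T :\: T']| <= 1 by move: leRDj; rewrite RDy; lia.
    by move/card_le1_eqP/(_ x i S_x S_i) ->.
  have : 0 < #|[set x | (x, y) \in T :\: T']| by apply/card_gt0P; exists x.
  by move: (leRD y nyj); rewrite RDy; lia.
have closed u w : u \in X -> adj T u w -> w \in X \/ (u = inr j /\ w = inl i).
  case: u => [x|y]; case: w => [x'|y'] //= uX xy; first by left; apply: altX uX _.
  case xyT': ((x', y) \in T'); first by left; apply: altX uX _.
  by case: (missing x' y uX xy (negbT xyT')) => -> ->; right.
have iX : inl i \notin X.
  apply/negP; rewrite inE => vi.
  by have := sink_alt_back cTT' sink_v vi (w := inr j) ijT; rewrite /= (negbTE ijT').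
have jX : inr j \in X.
  apply/idPn => jX; case/negP: iX.
  apply: (connectedG_closed (u := v) connT); first by rewrite inE connect0.
  move=> u w uX /(closed _ _ uX) [//|[eu _]].
  by rewrite eu in uX; rewrite uX in jX.
have allX w : w \in inl i |: X.
  apply: (connectedG_closed (u := inl i) connT); first exact: setU11.
  move=> u w'; rewrite in_setU1 => /orP[/eqP-> | uX ad].
    by case: w' => [//|y] /leaf ->; rewrite in_setU1 jX orbT.
  by case: (closed _ _ uX ad) => [w'X|[_ ->]]; rewrite in_setU1 ?w'X ?eqxx ?orbT.
have [y iyT'] : exists y, (i, y) \in T'.
  have /connectP[[|w p] //= /andP[iw _] _] := connT' (inl i) (inr j).
  by case: w iw => [//|y] iyT'; exists y.
have := allX (inr y); rewrite in_setU1 /= => yX.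
by case/negP: iX; apply: altX yX _.
Qed.

End Bipartite.

Section Exchange.
Variables (n d : nat) (Tj : {set edge n d}) (i : 'I_n) (j : 'I_d).
Hypotheses (connTj : connectedG Tj) (acycTj : acyclic Tj) (ijT : (i, j) \in Tj).
Local Notation F := (Tj :\ (i, j)).

Let symF : connect_sym (adj F) := sym_connect_sym (@adj_sym n d F).

(* (a, k) must join the components of i and j in F; the other orientation would close
   an alternating cycle through (i, j). *)
Lemma exchange_sides a k : connectedG ((a, k) |: F) -> compatible Tj ((a, k) |: F) ->
  (a, k) \notin Tj ->
  connect (adj F) (inl i) (inr k) /\ connect (adj F) (inr j) (inl a).
Proof.
move=> connTk cjk akT.
have noij : ~~ connect (adj F) (inl i) (inr j) := acycTj ijT.
have sFj : F \subset Tj := subD1set _ _.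
have sFk : F \subset (a, k) |: F := subsetUr _ _.
have [ia|ja] := orP (connect_setD1 (i, j) connTj (inl a));
  have [ik|jk] := orP (connect_setD1 (i, j) connTj (inr k)) => //.
- by case/negP: noij; apply: connect_setU1 connTk ia ik (inr j).
- have ji : connect (alt Tj ((a, k) |: F)) (inr j) (inl i).
    apply: connect_trans (connect_adj_alt sFj sFk jk) _.
    apply: connect_trans (connect1 (_ : alt _ _ (inr k) (inl a))) _; first exact: setU11.
    by apply: connect_adj_alt sFj sFk _ _ _; rewrite symF.
  have := compatible_alt_back cjk (_ : alt _ _ (inl i) (inr j)) ji.
  rewrite /= in_setU1 setD11 orbF => /(_ ijT) /eqP eij.
  by rewrite -eij ijT in akT.
- by case/negP: noij; rewrite symF; apply: connect_setU1 connTk ja jk (inl i).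
Qed.

Lemma exchange_unique a k b k' :
  connectedG ((a, k) |: F) -> connectedG ((b, k') |: F) ->
  (a, k) \notin Tj -> (b, k') \notin Tj ->
  compatible Tj ((a, k) |: F) -> compatible Tj ((b, k') |: F) ->
  compatible ((a, k) |: F) ((b, k') |: F) -> (a, k) = (b, k').
Proof.
move=> connTk connTk' akT bkT cjk cjk' ckk'.
have [ik ja] := exchange_sides connTk cjk akT.
have [ik' jb] := exchange_sides connTk' cjk' bkT.
have viaF u w : connect (adj F) u w -> connect (alt ((a, k) |: F) ((b, k') |: F)) u w.
  exact: connect_adj_alt (subsetUr _ _) (subsetUr _ _) u w.
have ka : connect (alt ((a, k) |: F) ((b, k') |: F)) (inr k) (inl a).
  apply: connect_trans (viaF _ _ (_ : connect _ (inr k) (inl i))) _; first by rewrite symF.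
  apply: connect_trans (viaF _ _ ik') _.
  apply: connect_trans (connect1 (_ : alt _ _ (inr k') (inl b))) _; first exact: setU11.
  apply: connect_trans (viaF _ _ (_ : connect _ (inl b) (inr j))) (viaF _ _ ja).
  by rewrite symF.
have := compatible_alt_back ckk' (_ : alt _ _ (inl a) (inr k)) ka.
rewrite /= setU11 in_setU1 => /(_ isT) /orP[/eqP // | /setD1P[_ akTj]].
by rewrite akTj in akT.
Qed.

End Exchange.

Section TreeLinkageCovector.
Variables (n d : nat) (GG : {set {set edge n d}}).
Variables (t : 'I_d -> nat) (T : 'I_d -> {set edge n d}).
Hypothesis GG_fms : encodes_fms GG.
Hypothesis T_GG : forall k, T k \in GG.
Hypothesis RD_T : forall k y, RD (T k) y = t y + (k == y) + 1.
Variable j : 'I_d.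

Lemma T_tree k : spanning_tree (T k).
Proof. by case: GG_fms => trees _ _; exact: trees (T_GG k). Qed.

Lemma T_compatible k k' : compatible (T k) (T k').
Proof. by case: GG_fms => _ _ compat; exact: compat (T_GG k) (T_GG k'). Qed.

Definition tree_nbrs : {set 'I_n} := [set i | (i, j) \in T j].
Definition vertex_labels : {set 'I_n} := [set i | (i, j) \in Tt T].
Definition near_label k : option 'I_n := [pick i | (i, j) \in T j :\: T k].

Lemma card_tree_nbrs : #|tree_nbrs| = t j + 2.
Proof. by rewrite -[LHS]/(RD _ _) RD_T eqxx -addnA. Qed.

Lemma vertex_labels_sub : vertex_labels \subset tree_nbrs.
Proof. by apply/subsetP => i; rewrite !inE => /bigcapP; apply. Qed.

Lemma linked_exchange k : linked T j k -> exists i a,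
  [/\ near_label k = Some i, (i, j) \in T j :\: T k,
      T k = (a, k) |: (T j :\ (i, j)) & (a, k) \notin T j].
Proof.
case/and3P => _ /existsP[i /eqP jk] /existsP[a /eqP kj].
have [Tk akT] := setD_set1_swap jk kj.
exists i, a; split; rewrite ?jk ?set11 //.
rewrite /near_label; case: pickP => [i'|/(_ i)]; last by rewrite jk set11.
by rewrite jk inE => /eqP[->].
Qed.

Lemma near_label_inj : {in [set k | linked T j k] &, injective near_label}.
Proof.
move=> k k'; rewrite !inE => /linked_exchange[i [a [-> /setDP[ijT _] Tk akT]]].
move=> /linked_exchange[i' [a' [-> _ Tk' a'kT]]] [ii']; rewrite -{i'}ii' in Tk'.
have [connTj acycTj] := T_tree j.
have := exchange_unique connTj acycTj ijT (a := a) (k := k) (b := a') (k' := k').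
rewrite -Tk -Tk' => /(_ (T_tree k).1 (T_tree k').1 akT a'kT).
by move=> /(_ (@T_compatible j k) (@T_compatible j k') (@T_compatible k k')) [_ ->].
Qed.

Lemma near_label_mem k : linked T j k ->
  exists2 i, near_label k = Some i & i \in tree_nbrs :\: vertex_labels.
Proof.
case/linked_exchange => i [a [-> /setDP[ijT ijTk] _ _]]; exists i => //.
by rewrite !inE ijT andbT; apply: contra ijTk => /bigcapP/(_ k isT).
Qed.

Lemma unlabelled_not_leaf i :
  i \in tree_nbrs :\: vertex_labels -> ~~ incident_to_leaf (T j) (i, j).
Proof.
rewrite !inE /incident_to_leaf /= => /andP[not_label ijT].
have -> : (degG (T j) (inr j) == 1) = false by rewrite degG_inr RD_T eqxx /=; lia.
rewrite orbF; apply/negP => /eqP leaf_i; case/negP: not_label; apply/bigcapP => k _.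
apply: (compatible_leaf_edge (T_tree j).1 (T_tree k).1 (@T_compatible j k) ijT).
- by move=> y; apply: degG_inl_leaf leaf_i ijT.
- by move=> y yj; rewrite !RD_T eq_sym (negbTE yj) /=; lia.
- by rewrite !RD_T eqxx /=; lia.
Qed.

Lemma exists_linked_near_label i : i \in tree_nbrs :\: vertex_labels ->
  exists2 k, linked T j k & near_label k = Some i.
Proof.
move=> i_in; have ijT : (i, j) \in T j by move: i_in; rewrite !inE => /andP[].
case: GG_fms => trees link compat.
have [G' [[a k] [G'GG G'j akG' eqD]]] := link _ _ (T_GG j) ijT (unlabelled_not_leaf i_in).
have G'E : G' = (a, k) |: (T j :\ (i, j)) by rewrite eqD setD1K.
have ak_ij : (a, k) != (i, j) by apply: contraNneq G'j => e; rewrite G'E e setD1K.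
have akT : (a, k) \notin T j.
  apply/negP => akT; have : (a, k) \in T j :\ (i, j) by rewrite in_setD1 ak_ij.
  by rewrite eqD setD11.
have G'T : G' = T k.
  apply: compatible_RD_le_eq (trees _ G'GG).1 (compat _ _ G'GG (T_GG k)) _ => y.
  rewrite G'E; apply: leq_trans (RD_setU1 _ _ _) _.
  have := RD_setD1 y ijT; rewrite !RD_T /= [t y + _ + 1]addnAC => /addIn ->.
  by rewrite addnAC.
have jk : j != k by apply: contraNneq G'j => ->; rewrite G'T.
have [ij_only ak_only] := swap_setD_set1 ijT akT.
rewrite -G'E G'T in ij_only ak_only.
have lk : linked T j k.
  apply/and3P; split=> //; apply/existsP; first by exists i; rewrite ij_only.
  by exists a; rewrite ak_only.
exists k => //; have [i' [a' [-> + _ _]]] := linked_exchange lk.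
by rewrite ij_only inE => /eqP[->].
Qed.

Lemma image_near_label :
  near_label @: [set k | linked T j k] = Some @: (tree_nbrs :\: vertex_labels).
Proof.
apply/setP => o; apply/imsetP/imsetP => [[k] | [i i_in ->]].
  by rewrite inE => /near_label_mem[i -> i_in] ->; exists i.
by have [k lk <-] := exists_linked_near_label i_in; exists k; rewrite ?inE.
Qed.

Lemma augmented_degreeE : augmented_degree T j = t j + 2.
Proof.
rewrite /augmented_degree -[X in _ + X]/#|vertex_labels|.
rewrite -(card_in_imset near_label_inj) image_near_label (card_imset _ (@Some_inj _)).
rewrite -card_tree_nbrs -(cardsID vertex_labels tree_nbrs).
by rewrite (setIidPr vertex_labels_sub) addnC.
Qed.

End TreeLinkageCovector.

Theorem mainTheorem14 (n d : nat) (GG : {set {set edge n d}})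
  (t : 'I_d -> nat) (T : 'I_d -> {set edge n d}) :
  0 < d -> 2 <= n ->
  encodes_fms GG ->
  \sum_(j < d) t j = n - 2 ->
  (* T j is the (unique) tree TT(t + e_j) of GG, i.e. RD(T j) = t + e_j + 1 *)
  (forall j, T j \in GG /\ (forall k, RD (T j) k = t k + (j == k) + 1)) ->
  forall j : 'I_d, augmented_degree T j = t j + 2.
Proof.
(* The bounds on d and n and the value of the sum of t are not needed. *)
move=> _ _ GG_fms _ hT j.
exact: augmented_degreeE GG_fms (fun k => (hT k).1) (fun k => (hT k).2) j.
Qed.
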